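(* Suppose $(Y,y_0)$ is sequentially $0$-connected and $(X,x_0)$ is well-pointed, i.e. $\{x_0\}\to X$ is a cofibration. Then every sequence $\{f_k\}_{k\in\mathbb{N}}$ of (unbased) maps $X\to Y$ that converges to $y_0$ is sequentially homotopic to a sequence $\{g_k\}_{k\in\mathbb{N}}$ of based maps $(X,x_0)\to(Y,y_0)$ that converges to $y_0$.
   Context: All spaces Hausdorff. A sequence of maps $\{f_k\}$ into $Y$ converges to $y_0$ if for every neighborhood $U$ of $y_0$, $\operatorname{Im}(f_k)\subseteq U$ for all but finitely many $k$. Sequences $\{f_k\},\{g_k\}$ converging to $y_0$ are sequentially homotopic if there are free homotopies $H_k$ from $f_k$ to $g_k$ with $\{H_k\}$ converging to $y_0$. $(Y,y_0)$ is sequentially $0$-connected if the set of based homotopy classes $[(\mathbb{H}_0,0),(Y,y_0)]$ is a singleton, where $\mathbb{H}_0=\{0\}\cup\{1/m:m\in\mathbb{N}\}\subseteq\mathbb{R}$ with basepoint $0$. *)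

From HB Require Import structures.
From mathcomp Require Import all_boot all_order all_algebra.
From mathcomp Require Import all_classical all_reals topology.
From mathcomp Require Import Rstruct Rstruct_topology.
From Stdlib Require Rdefinitions.
Notation R := Rdefinitions.R.
Set Implicit Arguments. Unset Strict Implicit. Unset Printing Implicit Defensive.
Import Order.TTheory GRing.Theory Num.Theory.
Local Open Scope classical_set_scope.
Local Open Scope ring_scope.

Definition unitI : set R := [set t : R | 0 <= t <= 1].

Definition is_homotopy {X Y : topologicalType} (H : X * R -> Y) : Prop :=
  {within [set p : X * R | unitI p.2], continuous H}.

Definition homotopy_from_to {X Y : topologicalType} (H : X * R -> Y)
    (f g : X -> Y) : Prop :=
  [/\ is_homotopy H, (forall x, H (x, 0) = f x) & (forall x, H (x, 1) = g x)].

Definition seq_maps_converge {X Y : topologicalType} (f : nat -> X -> Y)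
    (y0 : Y) : Prop :=
  forall U : set Y, nbhs y0 U ->
    exists N : nat, forall k : nat, leq N k -> range (f k) `<=` U.

Definition seq_homotopies_converge {X Y : topologicalType}
    (H : nat -> X * R -> Y) (y0 : Y) : Prop :=
  forall U : set Y, nbhs y0 U ->
    exists N : nat, forall k : nat, leq N k ->
      H k @` [set p : X * R | unitI p.2] `<=` U.

Definition seq_homotopic {X Y : topologicalType} (f g : nat -> X -> Y)
    (y0 : Y) : Prop :=
  exists H : nat -> X * R -> Y,
    (forall k, homotopy_from_to (H k) (f k) (g k)) /\
    seq_homotopies_converge H y0.

Definition H0 : set R := [set t : R | t = 0 \/ exists m : nat, leq 1 m /\ t = m%:R^-1].

(* Based maps (H_0, 0) -> (Y, y0), represented by functions R -> Y
   continuous on the subspace H_0 (values off H_0 are irrelevant). *)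
Definition based_H0_map {Y : topologicalType} (y0 : Y) (a : R -> Y) : Prop :=
  {within H0, continuous a} /\ a 0 = y0.

Definition based_H0_homotopic {Y : topologicalType} (y0 : Y) (a b : R -> Y) : Prop :=
  exists G : R * R -> Y,
    [/\ {within [set p : R * R | H0 p.1 /\ unitI p.2], continuous G},
        (forall s, H0 s -> G (s, 0) = a s),
        (forall s, H0 s -> G (s, 1) = b s) &
        (forall t, unitI t -> G (0, t) = y0)].

(* (Y, y0) is sequentially 0-connected: [(H_0,0),(Y,y0)] is a singleton.
   This set is always nonempty (constant map), so this says any two based
   maps are based-homotopic. *)
Definition seq_0_connected {Y : topologicalType} (y0 : Y) : Prop :=
  forall a b : R -> Y, based_H0_map y0 a -> based_H0_map y0 b ->
    based_H0_homotopic y0 a b.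

(* A homotopy {x0} x I -> Z is encoded as a path p : R -> Z on [0,1]. *)
Definition well_pointed {X : topologicalType} (x0 : X) : Prop :=
  forall (Z : topologicalType) (f : X -> Z) (p : R -> Z),
    continuous f -> {within unitI, continuous p} -> p 0 = f x0 ->
    exists H : X * R -> Z,
      [/\ is_homotopy H, (forall x, H (x, 0) = f x) &
          (forall t, unitI t -> H (x0, t) = p t)].

From HB Require Import structures.
From mathcomp Require Import all_boot all_order all_algebra.
From mathcomp Require Import all_classical all_reals topology.
From mathcomp Require Import Rstruct Rstruct_topology.
From mathcomp Require Import normedtype sequences.
From mathcomp Require Import lra.
Import Order.TTheory GRing.Theory Num.Theory.
Local Open Scope classical_set_scope.
Local Open Scope ring_scope.

(* The values c_k = f_k(x0) converge to y0, so 1/(k+1) |-> c_k, 0 |-> y0 is a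
   based map H0 -> Y.  Sequential 0-connectedness contracts it relative to the
   basepoint; restricting the contraction to {1/(k+1)} x I gives paths p_k
   from c_k to y0, which converge uniformly to y0 by compactness of I.
   The homotopy extension property of x0 is then used once, for the map
   x |-> (f_k x)_k into the product Y^nat and the path t |-> (p_k t)_k, with
   Y^nat cut down to the sequences whose k-th term lies in f_k(X) u p_k(I).
   The coordinates of the extension are homotopies H_k from f_k to maps g_k
   based at y0, and the image of H_k stays in f_k(X) u p_k(I), so that the
   H_k converge to y0. *)

Lemma continuous_ptws {I : Type} {T Y : topologicalType}
    (h : T -> {ptws I -> Y}) :
  (forall i, continuous (fun t => h t i)) -> continuous h.
Proof.
move=> hi t; apply/cvg_sup => i; apply/cvg_image.
  by apply/seteqP; split => v // _; exists (fun=> v).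
move=> V /= /(hi i t) nV.
exists ((fun z : {ptws I -> Y} => z i) @^-1` V) => //.
by rewrite image_preimage //; apply/seteqP; split => v // _; exists (fun=> v).
Qed.

Lemma continuous_pair {T U V : topologicalType} (f : T -> U) (g : T -> V) :
  continuous f -> continuous g -> continuous (fun t => (f t, g t)).
Proof.
move=> cf cg t.
exact: (@cvg_pair _ _ _ (nbhs t) (nbhs (f t)) (nbhs (g t)) _ _ _ f g
  (cf t) (cg t)).
Qed.

Lemma within_continuous_comp_into {T U Y : topologicalType}
    (A : set T) (D : set U) (h : T -> U) (G : U -> Y) :
  {within D, continuous G} -> {within A, continuous h} -> h @` A `<=` D ->
  {within A, continuous (G \o h)}.
Proof.
move=> /subspace_sigL_continuousP cG /subspace_sigL_continuousP ch hAD.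
apply/subspace_sigL_continuousP.
pose hD (a : set_type A) : set_type D :=
  exist _ (h (set_val a)) (mem_set (hAD _ (imageP h (set_valP a)))).
have -> : sigL A (G \o h) = sigL D G \o hD by [].
move=> a; apply: continuous_comp; last exact: cG.
exact: (@continuous_comp_initial (set_type D) _ _ set_val hD ch).
Qed.

Lemma continuous_comp_into {T U Y : topologicalType}
    (D : set U) (h : T -> U) (G : U -> Y) :
  {within D, continuous G} -> continuous h -> (forall t, D (h t)) ->
  continuous (G \o h).
Proof.
move=> cG ch hD; apply/continuous_subspace_setT.
apply: (@within_continuous_comp_into T U Y setT D h G cG).
  exact: continuous_subspaceT.
by move=> _ [t _ <-].
Qed.

Lemma unitI0 : unitI 0.
Proof. by rewrite /unitI /= lexx ler01. Qed.

Lemma unitI1 : unitI 1.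
Proof. by rewrite /unitI /= lexx ler01. Qed.

Definition clamp01 (t : R) : R := Order.min (Order.max t 0) 1.

Lemma clamp01_continuous : continuous clamp01.
Proof.
move=> t; apply: (@continuous_min _ _ (fun s : R^o => Order.max s 0) (cst 1)).
  by apply: (@continuous_max _ _ id (cst 0)); [exact: cvg_id | exact: cvg_cst].
exact: cvg_cst.
Qed.

Lemma clamp01_unitI t : unitI (clamp01 t).
Proof.
apply/andP; split; first by rewrite le_min ler01 le_max lexx orbT.
by rewrite ge_min lexx orbT.
Qed.

Lemma clamp01_id t : unitI t -> clamp01 t = t.
Proof. by case/andP => t0 t1; rewrite /clamp01 (max_l t0) (min_l t1). Qed.

Lemma truncn_round (m : nat) (x : R) :
  `|x - m%:R| < 2^-1 -> Num.truncn (x + 2^-1) = m.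
Proof.
rewrite ltr_norml => /andP[lo hi]; apply: truncn_def.
have half : (2^-1 + 2^-1 : R) = 1 by rewrite [RHS]splitr div1r.
rewrite -addn1 natrD; move: lo hi half; set h := (2^-1 : R) => *.
by apply/andP; split; lra.
Qed.

(* Rounding [s^-1] to the nearest integer makes the map locally constant
   around each [1 / k.+1], not only on [H0]. *)
Definition H0_of_seq {Y : Type} (y0 : Y) (c : nat -> Y) (s : R) : Y :=
  if s == 0 then y0 else c (Num.truncn (s^-1 + 2^-1)).-1.

Section H0OfSeq.
Context {Y : topologicalType} (y0 : Y) (c : nat -> Y).

Lemma H0_of_seq0 : H0_of_seq y0 c 0 = y0.
Proof. by rewrite /H0_of_seq eqxx. Qed.

Lemma H0_of_seq_inv k : H0_of_seq y0 c k.+1%:R^-1 = c k.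
Proof.
rewrite /H0_of_seq invr_eq0 pnatr_eq0 /= invrK.
by rewrite (@truncn_round k.+1) // subrr normr0 invr_gt0 ltr0n.
Qed.

Lemma H0_of_seq_near_inv k :
  \forall t \near (k.+1%:R^-1 : R), H0_of_seq y0 c t = c k.
Proof.
have k0 : (k.+1%:R^-1 : R) != 0 by rewrite invr_eq0 pnatr_eq0.
have : (fun t : R^o => t^-1) @ (k.+1%:R^-1 : R^o) --> (k.+1%:R^-1^-1 : R^o).
  exact: inv_continuous.
move=> /cvgrPdist_lt /(_ 2^-1).
rewrite invr_gt0 ltr0n invrK => /(_ isT); apply: filterS => t.
rewrite /H0_of_seq; case: eqP => [-> | _ near_k]; last first.
  by rewrite (@truncn_round k.+1) // distrC.
have half_lt1 : (2^-1 : R) < 1 by rewrite invf_lt1 // ltr1n.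
by rewrite invr0 subr0 ger0_norm // ltNge (le_trans (ltW half_lt1)) // ler1n.
Qed.

Lemma H0_of_seq_continuous :
  c @ \oo --> y0 -> {within H0, continuous (H0_of_seq y0 c)}.
Proof.
move=> cvg_c; apply/subspace_continuousP => s [-> | [[|k] [// _ ->]]].
- rewrite /from_subspace H0_of_seq0 => U nU; have [N _ cU] := cvg_c U nU.
  have := @nbhs0_lt _ R^o N.+1%:R^-1.
  rewrite invr_gt0 ltr0n => /(_ isT).
  apply: filterS => t small [-> | [[|n] [// _ tn]]].
    by rewrite /= H0_of_seq0; exact: nbhs_singleton.
  rewrite /= tn H0_of_seq_inv; apply: cU.
  move: small; rewrite tn ger0_norm ?invr_ge0 ?ler0n //.
  by rewrite ltf_pV2 ?posrE ?ltr0n // ltr_nat ltnS => /ltnW.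
- rewrite /from_subspace H0_of_seq_inv => U nU.
  apply: filterS (H0_of_seq_near_inv k) => t tk _.
  by rewrite /= tk; exact: nbhs_singleton.
Qed.

End H0OfSeq.

Definition seq_paths_converge {Y : topologicalType} (p : nat -> R -> Y)
    (y0 : Y) : Prop :=
  forall U, nbhs y0 U -> \forall k \near \oo, p k @` unitI `<=` U.

Lemma H0_inv_succ k : H0 k.+1%:R^-1.
Proof. by right; exists k.+1. Qed.

Lemma unitI_compact : compact unitI.
Proof.
have -> : unitI = `[0, 1]%classic.
  by apply/seteqP; split => t; rewrite /= in_itv.
exact: segment_compact.
Qed.

(* A tube lemma, over the compact [I]. *)
Lemma H0_homotopy_paths_converge {Y : topologicalType}
    (G : R * R -> Y) (y0 : Y) :
  {within [set p : R * R | H0 p.1 /\ unitI p.2], continuous G} ->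
  (forall t, unitI t -> G (0, t) = y0) ->
  seq_paths_converge (fun k t => G (k.+1%:R^-1, t)) y0.
Proof.
move=> /subspace_continuousP cG G0 U nU.
have /compact_near_coveringP/near_covering_withinP := unitI_compact.
move=> /(_ nat \oo (fun k t => U (G (k.+1%:R^-1, t))) _) [t It|N _ near_U].
  have := cG (0, t) (conj (or_introl erefl) It); rewrite /from_subspace G0 //.
  move=> /(_ U nU) [[A B] /= [nA nB] sAB].
  exists (B, [set k | A k.+1%:R^-1]) => /=; first split => //.
    exact: (@cvg_harmonic R _ nA).
  case=> t' k /= [Bt' Ak] It'; apply: (sAB (_, t')) => //; split => //.
  exact: H0_inv_succ.
by exists N => // k Nk _ [t It <-]; exact: near_U.
Qed.

Lemma seq_0_connected_null_paths {Y : topologicalType}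
    (y0 : Y) (c : nat -> Y) :
  seq_0_connected y0 -> c @ \oo --> y0 ->
  exists p : nat -> R -> Y,
    [/\ forall k, {within unitI, continuous (p k)}, (forall k, p k 0 = c k),
        (forall k, p k 1 = y0) & seq_paths_converge p y0].
Proof.
move=> conn_y0 cvg_c.
have a_based : based_H0_map y0 (H0_of_seq y0 c).
  by split; [exact: H0_of_seq_continuous | exact: H0_of_seq0].
have cst_based : based_H0_map y0 (fun=> y0).
  by split => //; apply: continuous_subspaceT; exact: cst_continuous.
have [G [cG G0 G1 Gy0]] := conn_y0 _ _ a_based cst_based.
exists (fun k t => G (k.+1%:R^-1, t)); split => [k||k|].
- apply: (@within_continuous_comp_into _ (R * R)%type _ unitI _
    (fun t => (k.+1%:R^-1, t)) G cG).
    apply/continuous_subspaceT/continuous_pair; first exact: cst_continuous.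
    by move=> ?; exact: cvg_id.
  by move=> _ [t It <-]; split => //; exact: H0_inv_succ.
- by move=> k; rewrite G0 ?H0_of_seq_inv //; exact: H0_inv_succ.
- by rewrite G1 //; exact: H0_inv_succ.
- exact: H0_homotopy_paths_converge.
Qed.

Section SeqHomotopyExtension.
Context {X Y : topologicalType} (x0 : X) (y0 : Y).
Context (f : nat -> X -> Y) (p : nat -> R -> Y).
Hypothesis cf : forall k, continuous (f k).
Hypothesis cvg_f : seq_maps_converge f y0.
Hypothesis cp : forall k, {within unitI, continuous (p k)}.
Hypothesis cvg_p : seq_paths_converge p y0.
Hypothesis wp : well_pointed x0.
Hypothesis p0 : forall k, p k 0 = f k x0.

Let S : set {ptws nat -> Y} :=
  [set z | forall k, range (f k) (z k) \/ (p k @` unitI) (z k)].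

Let S_near U : nbhs y0 U -> \forall k \near \oo, forall z, S z -> U (z k).
Proof.
move=> nU; have f_near : \forall k \near \oo, range (f k) `<=` U.
  by have [N fU] := cvg_f U nU; exists N.
apply: (@filterS2 _ _ _ _ _ _ _ f_near (cvg_p U nU)).
by move=> k fU pU z /(_ k) [/fU | /pU].
Qed.

Let fvals_in_S x : (fun k => f k x) \in S.
Proof. by apply/mem_set => k; left; exists x. Qed.

(* [p k] is only controlled on [I]; clamping keeps [pvals] inside [S]. *)
Let pvals_in_S t : (fun k => p k (clamp01 t)) \in S.
Proof.
by apply/mem_set => k; right; exists (clamp01 t) => //; exact: clamp01_unitI.
Qed.

Let fvals (x : X) : set_type S := exist (fun z => z \in S) _ (fvals_in_S x).

Let pvals (t : R) : set_type S := exist (fun z => z \in S) _ (pvals_in_S t).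

Let fvals_continuous : continuous fvals.
Proof.
by apply: (@continuous_comp_initial (set_type S)); apply: continuous_ptws.
Qed.

Let pvals_continuous : {within unitI, continuous pvals}.
Proof.
apply: continuous_subspaceT; apply: (@continuous_comp_initial (set_type S)).
apply: continuous_ptws => k /=.
apply: (@continuous_comp_into _ _ _ unitI clamp01 (p k) (cp k)).
  exact: clamp01_continuous.
exact: clamp01_unitI.
Qed.

Lemma seq_homotopy_extension :
  exists H : nat -> X * R -> Y,
    [/\ forall k, is_homotopy (H k), (forall k x, H k (x, 0) = f k x),
        (forall k t, unitI t -> H k (x0, t) = p k t) &
        seq_homotopies_converge H y0].
Proof.
have P0 : pvals 0 = fvals x0.
  apply: val_inj; apply: funext => k /=.
  by rewrite clamp01_id ?p0 //; exact: unitI0.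
have [H [cH H0x Hx0]] := wp _ fvals pvals fvals_continuous pvals_continuous P0.
exists (fun k q => set_val (H q) k); split.
- move=> k.
  apply: (@within_continuous_comp _ _ _ _ H (fun z : S => set_val z k)).
    move=> z _.
    apply: (@continuous_comp _ _ _ set_val (fun w : {ptws nat -> Y} => w k)).
      exact: initial_continuous.
    exact: (@proj_continuous nat (fun=> Y)).
  exact: cH.
- by move=> k x; rewrite H0x.
- by move=> k t It; rewrite Hx0 // set_valE /= clamp01_id.
- move=> U /S_near [N _ US]; exists N => k Nk _ [q _ <-].
  exact: (US k Nk _ (set_valP (H q))).
Qed.

End SeqHomotopyExtension.

Theorem proposition2p27 (X Y : topologicalType) (x0 : X) (y0 : Y) :
  hausdorff_space X -> hausdorff_space Y ->
  seq_0_connected y0 -> well_pointed x0 ->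
  forall f : nat -> X -> Y,
    (forall k, continuous (f k)) -> seq_maps_converge f y0 ->
    exists g : nat -> X -> Y,
      [/\ (forall k, continuous (g k)), (forall k, g k x0 = y0),
          seq_maps_converge g y0 & seq_homotopic f g y0].
Proof.
move=> _ _ conn_y0 wp f cf cvg_f.
have cvg_fx0 : (fun k => f k x0) @ \oo --> y0.
  by move=> U /cvg_f [N fU]; exists N => // k Nk; exact: fU k Nk _ (imageT _ _).
have [p [cp p0 p1 cvg_p]] := seq_0_connected_null_paths _ _ conn_y0 cvg_fx0.
have [H [cH H0 Hx0 cvg_H]] :=
  seq_homotopy_extension _ _ _ _ cf cvg_f cp cvg_p wp p0.
exists (fun k x => H k (x, 1)); split.
- move=> k.
  apply: (@continuous_comp_into _ (X * R)%type _ _ (fun x => (x, 1)) _ (cH k)).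
    apply: continuous_pair; last exact: cst_continuous.
    by move=> ?; exact: cvg_id.
  by move=> x; exact: unitI1.
- by move=> k; rewrite Hx0 ?p1 //; exact: unitI1.
- move=> U /cvg_H [N HU]; exists N => k Nk _ [x _ <-].
  by apply: (HU k Nk); exists (x, 1) => //; exact: unitI1.
- by exists H; split => // k; split.
Qed.
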